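(* Let $O_{(4,1)}(x,y,z,w)=x^4z^2w^2+y^4x^2w^2+z^4x^2y^2+w^4y^2z^2-4x^2y^2z^2w^2$, and let $F$ be a real form of degree $8$ in $x,y,z,w$ with $0\le F\le O_{(4,1)}$ pointwise on $\mathbb R^4$. Let $H$ be the part of $F$ consisting of its terms in the monomials $x^4z^2w^2$, $y^4x^2w^2$, $z^4x^2y^2$, $w^4y^2z^2$, $x^2y^2z^2w^2$, i.e. $H=a\,x^4z^2w^2+b\,y^4x^2w^2+c\,z^4x^2y^2+d\,w^4y^2z^2+e\,x^2y^2z^2w^2$ where $a,b,c,d,e$ are the corresponding coefficients of $F$. Then $H=a\,O_{(4,1)}$, with $0\le a\le1$. *)

From HB Require Import structures.
From mathcomp Require Import all_boot all_order all_algebra.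
From mathcomp Require Import reals.
From mathcomp Require Import mpoly.

Set Implicit Arguments.
Unset Strict Implicit.
Unset Printing Implicit Defensive.

Import Order.TTheory GRing.Theory Num.Theory.
Local Open Scope ring_scope.

(* Monomials (exponent vectors (x,y,z,w)). *)
Definition m_xzw : 'X_{1..4} := [multinom [tuple 4%N; 0%N; 2%N; 2%N]].
Definition m_yxw : 'X_{1..4} := [multinom [tuple 2%N; 4%N; 0%N; 2%N]].
Definition m_zxy : 'X_{1..4} := [multinom [tuple 2%N; 2%N; 4%N; 0%N]].
Definition m_wyz : 'X_{1..4} := [multinom [tuple 0%N; 2%N; 2%N; 4%N]].
Definition m_xyzw : 'X_{1..4} := [multinom [tuple 2%N; 2%N; 2%N; 2%N]].

Definition O41 (R : realType) : {mpoly R[4]} :=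
  let x := 'X_(@Ordinal 4 0 isT) in let y := 'X_(@Ordinal 4 1 isT) in
  let z := 'X_(@Ordinal 4 2 isT) in let w := 'X_(@Ordinal 4 3 isT) in
  x ^+ 4 * z ^+ 2 * w ^+ 2 + y ^+ 4 * x ^+ 2 * w ^+ 2
  + z ^+ 4 * x ^+ 2 * y ^+ 2 + w ^+ 4 * y ^+ 2 * z ^+ 2
  - 4%:R * (x ^+ 2 * y ^+ 2 * z ^+ 2 * w ^+ 2).

Definition Hpart (R : realType) (F : {mpoly R[4]}) : {mpoly R[4]} :=
  F@_m_xzw *: 'X_[m_xzw] + F@_m_yxw *: 'X_[m_yxw] + F@_m_zxy *: 'X_[m_zxy]
  + F@_m_wyz *: 'X_[m_wyz] + F@_m_xyzw *: 'X_[m_xyzw].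

From HB Require Import structures.
From mathcomp Require Import all_boot all_order all_algebra.
From mathcomp Require Import reals.
From mathcomp Require Import mpoly.
From mathcomp Require Import ring lra zify.

Set Implicit Arguments.
Unset Strict Implicit.
Unset Printing Implicit Defensive.

Import Order.TTheory GRing.Theory Num.Theory.
Local Open Scope ring_scope.

(* Averaging F over the sign changes of the variables preserves 0 <= . <= O41, as O41
   is even in every variable, and leaves the even part of F.  Along a curve
   t |-> (t ^ q_i)_i with t -> 0+, these bounds force every monomial of the even part
   whose q-weight lies below the q-weights of all monomials of O41 to vanish; taking
   for q a facet of the Newton simplex of O41, made injective by a tie-breaker, this
   kills every even monomial outside the simplex, so the even part of F is H.
   Evaluating 0 <= H <= O41 at (1,1,1,1), (s,1,1,1), (1,s,1,1), (1,1,s,1) then forces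
   the four vertex coefficients to be equal and the central one to be -4a, and the
   point (2,1,1,1) gives 0 <= a <= 1. *)

Section PolyNearZero.
Variable R : realFieldType.

Lemma eq0_of_norm_le_linear (x C : R) :
  (forall t, 0 < t -> t <= 1 -> `|x| <= C * t) -> x = 0.
Proof.
move=> le_xCt; apply/eqP/negPn/negP => x_neq0.
have x_gt0 : 0 < `|x| by rewrite normr_gt0.
have x_leC : `|x| <= C by rewrite -[C]mulr1 le_xCt.
have C_gt0 : 0 < C by apply: lt_le_trans x_leC.
set t := `|x| / (2 * C).
have t_gt0 : 0 < t by rewrite divr_gt0 ?mulr_gt0.
have t_le1 : t <= 1 by rewrite ler_pdivrMr ?mulr_gt0 // mul1r; lra.
have Ct : C * t = `|x| / 2 by rewrite /t; field; rewrite gt_eqF.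
by have := le_xCt t t_gt0 t_le1; rewrite Ct; lra.
Qed.

Lemma norm_horner_le (S : {poly R}) t : 0 <= t -> t <= 1 ->
  `|S.[t]| <= \sum_(i < size S) `|S`_i|.
Proof.
move=> t_ge0 t_le1; rewrite horner_coef.
apply: le_trans (ler_norm_sum _ _ _) _; apply: ler_sum => i _.
rewrite normrM -[leRHS]mulr1 ler_wpM2l // normrX ger0_norm //.
exact: exprn_ile1.
Qed.

Lemma coef_eq0_of_small_near0 (P : {poly R}) (M : R) k :
  (forall t, 0 < t -> t <= 1 -> `|P.[t]| <= M * t ^+ k) ->
  forall j, (j < k)%N -> P`_j = 0.
Proof.
move=> small j; elim/ltn_ind: j => j IH lt_jk.
set Q := drop_poly j P; set Q' := drop_poly 1 Q.
have take_j : take_poly j P = 0.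
  apply/polyP => i; rewrite coef_take_poly coef0.
  by case: ifP => // lt_ij; apply: IH => //; apply: ltn_trans lt_jk.
have take_1 : take_poly 1 Q = (Q`_0)%:P.
  by apply/polyP => -[|i]; rewrite coef_take_poly coefC.
have Q0 : Q`_0 = P`_j by rewrite coef_drop_poly.
rewrite -Q0; set B := \sum_(i < size Q') `|Q'`_i|.
(* Near 0, P = t^j (P_j + t Q'(t)) with |Q'(t)| <= B, so |P_j| <= (|M| + B) t. *)
apply: (@eq0_of_norm_le_linear _ (`|M| + B)) => t t_gt0 t_le1.
have tj_gt0 : 0 < t ^+ j by rewrite exprn_gt0.
have PtE : P.[t] = (Q`_0 + t * Q'.[t]) * t ^+ j.
  have QE : Q = (Q`_0)%:P + Q' * 'X by rewrite -[LHS](poly_take_drop 1 Q) take_1 expr1.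
  rewrite -[in LHS](poly_take_drop j P) take_j add0r -/Q {1}QE !hornerE.
  by rewrite [Q'.[t] * t]mulrC.
have lowQ : `|Q`_0 + t * Q'.[t]| <= `|M| * t.
  have nP : `|P.[t]| = `|Q`_0 + t * Q'.[t]| * t ^+ j.
    by rewrite PtE normrM [`|t ^+ j|]ger0_norm // ltW.
  rewrite -(ler_pM2r tj_gt0) -nP -mulrA -exprS.
  apply: le_trans (small t t_gt0 t_le1) _.
  apply: le_trans (ler_wpM2r (exprn_ge0 _ (ltW t_gt0)) (ler_norm M)) _.
  by rewrite ler_wpM2l // ler_wiXn2l // ltW.
have highQ : `|t * Q'.[t]| <= B * t.
  rewrite normrM ger0_norm ?(ltW t_gt0) // mulrC ler_pM2r //.
  exact: norm_horner_le (ltW t_gt0) t_le1.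
move: lowQ highQ; rewrite !ler_norml => /andP[l1 l2] /andP[h1 h2].
apply/andP; split; lra.
Qed.

Lemma eq_of_sqr_sub1_mul_ge0 (p r : R) :
  (forall s, 0 <= (s ^+ 2 - 1) * (p * s ^+ 2 - r)) -> p = r.
Proof.
move=> ge0; apply/eqP; rewrite -subr_eq0; apply/eqP.
apply: (@eq0_of_norm_le_linear _ (3 * `|p|)) => h h_gt0 h_le1.
have above : r <= p * (1 + h) ^+ 2.
  by move: (ge0 (1 + h)); rewrite pmulr_rge0 ?subr_ge0 //; nra.
have below : p * (1 - h) ^+ 2 <= r.
  by move: (ge0 (1 - h)); rewrite nmulr_rge0 ?subr_le0 //; nra.
have ph1 : - (`|p| * h) <= p * h <= `|p| * h.
  by rewrite -ler_norml normrM [`|h|]ger0_norm ?(ltW h_gt0).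
have ph2 : - (`|p| * h) <= p * h ^+ 2 <= `|p| * h.
  rewrite -ler_norml normrM normrX [`|h|]ger0_norm ?(ltW h_gt0) // ler_wpM2l //.
  by rewrite expr2 -[leRHS]mulr1 ler_wpM2l // ltW.
move: ph1 ph2 => /andP[? ?] /andP[? ?]; rewrite ler_norml; apply/andP; split; lra.
Qed.

End PolyNearZero.

Section MonomialRestriction.
Variables (R : realFieldType) (n : nat).
Implicit Types (F G : {mpoly R[n]}) (m : 'X_{1..n}) (v : 'I_n -> R).

Definition mrestrict F (P : pred 'X_{1..n}) : {mpoly R[n]} :=
  \sum_(m <- msupp F | P m) F@_m *: 'X_[m].

Lemma mcoeff_sum_seq F (s : seq 'X_{1..n}) m0 : uniq s ->
  (\sum_(m <- s) F@_m *: 'X_[m])@_m0 = if m0 \in s then F@_m0 else 0.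
Proof.
move=> s_uniq; rewrite raddf_sum /=.
under eq_bigr do rewrite mcoeffZ mcoeffX.
case: ifP => [m0s | m0Ns].
  rewrite (bigD1_seq m0) //= eqxx mulr1 big1_seq ?addr0 // => m /andP[m_neq _].
  by rewrite (negbTE m_neq) mulr0.
rewrite big1_seq // => m /andP[_ ms]; case: eqP => [m_eq | _]; last by rewrite mulr0.
by move: m0Ns; rewrite -m_eq ms.
Qed.

Lemma mcoeff_mrestrict F P m0 : (mrestrict F P)@_m0 = if P m0 then F@_m0 else 0.
Proof.
rewrite /mrestrict -big_filter mcoeff_sum_seq ?filter_uniq ?msupp_uniq //.
rewrite mem_filter; case: (P m0) => //=.
by case: ifP => // /negbT/memN_msupp_eq0->.
Qed.

Lemma meval_mrestrict F P v :
  (mrestrict F P).@[v] = \sum_(m <- msupp F | P m) F@_m * \prod_i v i ^+ m i.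
Proof.
rewrite /mrestrict (big_morph (meval v) (mevalD v) (meval0 v)).
by apply: eq_bigr => m _; rewrite mevalZ mevalX.
Qed.

Definition even_upto (k : nat) : pred 'X_{1..n} :=
  fun m => [forall i : 'I_n, (i < k)%N ==> ~~ odd (m i)].

Lemma mrestrict_even_upto0 F : mrestrict F (even_upto 0) = F.
Proof. by rewrite [RHS]mpolyE; apply: eq_bigl => m; apply/forallP. Qed.

Lemma even_uptoS (k : 'I_n) m : even_upto k.+1 m = even_upto k m && ~~ odd (m k).
Proof.
apply/forallP/andP => [even_m | [/forallP even_m even_mk] i].
  split; last by have := even_m k; rewrite ltnSn.
  by apply/forallP => i; apply/implyP => lt_ik; have := even_m i; rewrite ltnS ltnW.
apply/implyP; rewrite ltnS leq_eqVlt => /orP[/eqP/val_inj-> // | lt_ik].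
by have := even_m i; rewrite lt_ik.
Qed.

Definition flip (k : 'I_n) v : 'I_n -> R := fun i => if i == k then - v i else v i.

Lemma prod_flip k v m :
  \prod_i flip k v i ^+ m i = (-1) ^+ m k * \prod_i v i ^+ m i.
Proof.
rewrite (bigD1 k) // [in RHS](bigD1 k) //= /flip eqxx [(- v k) ^+ _]exprNn mulrA.
by congr (_ * _); apply: eq_bigr => i /negbTE->.
Qed.

Lemma meval_mrestrict_even_uptoS F (k : 'I_n) v :
  (mrestrict F (even_upto k.+1)).@[v] =
  ((mrestrict F (even_upto k)).@[v] + (mrestrict F (even_upto k)).@[flip k v]) / 2.
Proof.
rewrite !meval_mrestrict -big_split /= mulr_suml.
rewrite (eq_bigl (fun m => even_upto k m && ~~ odd (m k))); last exact: even_uptoS.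
rewrite big_mkcondr; apply: eq_bigr => m _; rewrite prod_flip -signr_odd.
by case: (odd (m k)); rewrite /= ?expr0 ?expr1; field.
Qed.

Lemma mrestrict_even_bounded F G :
  (forall v, 0 <= F.@[v] <= G.@[v]) -> (forall k v, G.@[flip k v] = G.@[v]) ->
  forall v, 0 <= (mrestrict F (even_upto n)).@[v] <= G.@[v].
Proof.
move=> boundF flipG; suff: forall k, (k <= n)%N -> forall v,
  0 <= (mrestrict F (even_upto k)).@[v] <= G.@[v] by apply.
elim=> [_ v | k IH lt_kn v]; first by rewrite mrestrict_even_upto0.
have /andP[lo1 hi1] := IH (ltnW lt_kn) v.
have /andP[lo2 hi2] := IH (ltnW lt_kn) (flip (Ordinal lt_kn) v).
rewrite flipG in hi2.
rewrite -[k]/(nat_of_ord (Ordinal lt_kn)) meval_mrestrict_even_uptoS.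
apply/andP; split; lra.
Qed.

End MonomialRestriction.

Section TorusRestriction.
Variables (R : realFieldType) (n : nat).

Definition mweight (q : 'I_n -> nat) (m : 'X_{1..n}) : nat := (\sum_i q i * m i)%N.

Lemma prod_torus (t : R) q (m : 'X_{1..n}) :
  \prod_i (t ^+ q i) ^+ m i = t ^+ mweight q m.
Proof. by rewrite /mweight -prodrXr; apply: eq_bigr => i _; rewrite -exprM. Qed.

(* Along the curve t |-> (t^(q i))_i, the coefficient of m0 is the coefficient of
   t^(mweight q m0), provided no other monomial of G has the same weight. *)
Lemma mcoeff_eq0_torus (G : {mpoly R[n]}) q m0 (M : R) :
  {in msupp G, forall m, mweight q m = mweight q m0 -> m = m0} ->
  (forall t, 0 < t -> t <= 1 ->
     `|G.@[fun i => t ^+ q i]| <= M * t ^+ (mweight q m0).+1) ->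
  G@_m0 = 0.
Proof.
move=> wt_inj small; have [m0G | ] := boolP (m0 \in msupp G); last exact: memN_msupp_eq0.
pose P : {poly R} := \sum_(m <- msupp G) G@_m *: 'X^(mweight q m).
have PtE t : P.[t] = G.@[fun i => t ^+ q i].
  rewrite mevalE horner_sum; apply: eq_bigr => m _.
  by rewrite hornerZ hornerXn prod_torus.
have <- : P`_(mweight q m0) = G@_m0.
  rewrite coef_sum (bigD1_seq m0) ?msupp_uniq //= coefZ coefXn eqxx /= mulr1.
  rewrite big1_seq ?addr0 // => m /andP[m_neq mG]; rewrite coefZ coefXn.
  case: eqP => [wt_eq | _]; last by rewrite mulr0.
  by move: m_neq; rewrite (wt_inj m mG (esym wt_eq)) eqxx.
apply: (coef_eq0_of_small_near0 (M := M) (k := (mweight q m0).+1)) => // t t0 t1.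
by rewrite PtE; apply: small.
Qed.

End TorusRestriction.

Definition i0 : 'I_4 := @Ordinal 4 0 isT.
Definition i1 : 'I_4 := @Ordinal 4 1 isT.
Definition i2 : 'I_4 := @Ordinal 4 2 isT.
Definition i3 : 'I_4 := @Ordinal 4 3 isT.

Lemma ord4P (i : 'I_4) : [\/ i = i0, i = i1, i = i2 | i = i3].
Proof.
case: i => -[|[|[|[|//]]]] lt_i4.
- by apply: Or41; apply: val_inj.
- by apply: Or42; apply: val_inj.
- by apply: Or43; apply: val_inj.
- by apply: Or44; apply: val_inj.
Qed.

Lemma big_ord4 (T : Type) (idx : T) (op : Monoid.law idx) (f : 'I_4 -> T) :
  \big[op/idx]_(i < 4) f i = op (op (op (f i0) (f i1)) (f i2)) (f i3).
Proof.
rewrite !big_ord_recl big_ord0 Monoid.mulm1 !Monoid.mulmA.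
by congr (op (op (op (f _) (f _)) (f _)) (f _)); apply: val_inj.
Qed.

Lemma mnm4P (m m' : 'X_{1..4}) :
  m i0 = m' i0 -> m i1 = m' i1 -> m i2 = m' i2 -> m i3 = m' i3 -> m = m'.
Proof. by move=> *; apply/mnmP => i; case: (ord4P i) => ->. Qed.

Lemma mdeg4 (m : 'X_{1..4}) : mdeg m = (m i0 + m i1 + m i2 + m i3)%N.
Proof. by rewrite mdegE big_ord4. Qed.

Lemma mweight4 (q : 'I_4 -> nat) (m : 'X_{1..4}) :
  mweight q m = (q i0 * m i0 + q i1 * m i1 + q i2 * m i2 + q i3 * m i3)%N.
Proof. by rewrite /mweight big_ord4. Qed.

Definition O41_vertices : seq 'X_{1..4} := [:: m_xzw; m_yxw; m_zxy; m_wyz].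
Definition O41_supp : seq 'X_{1..4} := [:: m_xzw; m_yxw; m_zxy; m_wyz; m_xyzw].

(* Equality of concrete multinomials is costly to decide by computation, so membership
   in O41_supp is decided on the halved exponent vectors. *)
Definition mnm_of_halves (h : nat * nat * nat * nat) : 'X_{1..4} :=
  let: (a, b, c, d) := h in [multinom [tuple a * 2; b * 2; c * 2; d * 2]]%N.

Lemma mnm_of_halves_inj : injective mnm_of_halves.
Proof.
move=> [[[a b] c] d] [[[a' b'] c'] d'] /mnmP eq_m.
have : (a * 2 = a' * 2 /\ b * 2 = b' * 2 /\ c * 2 = c' * 2 /\ d * 2 = d' * 2)%N
  := conj (eq_m i0) (conj (eq_m i1) (conj (eq_m i2) (eq_m i3))).
by move=> eqs; have [-> [-> [-> ->]]] : (a = a' /\ b = b' /\ c = c' /\ d = d')%N by lia.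
Qed.

Definition O41_halves : seq (nat * nat * nat * nat) :=
  [:: (2, 0, 1, 1); (1, 2, 0, 1); (1, 1, 2, 0); (0, 1, 1, 2); (1, 1, 1, 1)]%N.

Lemma O41_supp_halves : O41_supp = map mnm_of_halves O41_halves.
Proof. by []. Qed.

Lemma O41_supp_uniq : uniq O41_supp.
Proof. by rewrite O41_supp_halves (map_inj_uniq mnm_of_halves_inj). Qed.

Lemma even_upto4E (m : 'X_{1..4}) : even_upto 4 m =
  [&& ~~ odd (m i0), ~~ odd (m i1), ~~ odd (m i2) & ~~ odd (m i3)].
Proof.
apply/forallP/and4P => [even_m | [? ? ? ?] i]; last by case: (ord4P i) => ->.
by split; [exact: even_m i0 | exact: even_m i1 | exact: even_m i2 | exact: even_m i3].
Qed.

Lemma O41_supp_even : {in O41_supp, forall m, even_upto 4 m}.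
Proof. by apply/allP; rewrite /= !even_upto4E. Qed.

Section O41.
Variable R : realType.

Lemma O41_mon : O41 R =
  'X_[m_xzw] + 'X_[m_yxw] + 'X_[m_zxy] + 'X_[m_wyz] - 4%:R *: 'X_[m_xyzw].
Proof.
rewrite /O41 !mpolyXn -!mpolyXD scaler_nat mulr_natl.
by congr (_ + _ + _ + _ - _ *+ 4); congr 'X_[_]; apply: mnm4P;
  rewrite !mnmDE ?mulmnE !mnm1E.
Qed.

Lemma meval_O41 (v : 'I_4 -> R) : (O41 R).@[v] =
  \prod_i v i ^+ m_xzw i + \prod_i v i ^+ m_yxw i + \prod_i v i ^+ m_zxy i
  + \prod_i v i ^+ m_wyz i - 4%:R * \prod_i v i ^+ m_xyzw i.
Proof. by rewrite O41_mon mevalB !mevalD mevalZ !mevalX. Qed.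

Lemma O41_flip (k : 'I_4) (v : 'I_4 -> R) : (O41 R).@[flip k v] = (O41 R).@[v].
Proof.
have sign_even (m : 'X_{1..4}) : m \in O41_supp -> (-1) ^+ m k = 1 :> R.
  by move=> /O41_supp_even /forallP/(_ k); rewrite ltn_ord -signr_odd => /negbTE->.
by rewrite !meval_O41 !prod_flip !sign_even ?mul1r.
Qed.

Lemma O41_torus_le (q : 'I_4 -> nat) w (t : R) :
  {in O41_vertices, forall V, w < mweight q V}%N -> 0 < t -> t <= 1 ->
  (O41 R).@[fun i => t ^+ q i] <= 4%:R * t ^+ w.+1.
Proof.
move=> above t_gt0 t_le1; rewrite meval_O41 !prod_torus.
have le V : V \in O41_vertices -> t ^+ mweight q V <= t ^+ w.+1.
  by move=> V_vert; rewrite ler_wiXn2l ?(ltW t_gt0) ?above.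
have := le m_xzw; have := le m_yxw; have := le m_zxy; have := le m_wyz.
have : 0 <= t ^+ mweight q m_xyzw by rewrite exprn_ge0 // ltW.
rewrite !inE !eqxx ?orbT; lra.
Qed.

End O41.

(* The four facets of the Newton simplex of O41: each [facet j] takes the value 10 on
   three vertices and 18 on the fourth, and an even monomial of degree 8 lies in the
   simplex iff every facet is at least 10 on it. *)
Definition facet (j i : 'I_4) : nat :=
  nth 0 (nth [::] [:: [:: 0; 1; 2; 3]; [:: 3; 0; 1; 2]; [:: 2; 3; 0; 1]; [:: 1; 2; 3; 0]] j) i.

(* The tie-breaker writes (m i1, m i2, m i3) in base 9; as 729 = 9 ^ 3 exceeds it on
   monomials of degree 8, [facet_weight j] orders them by [facet j] and is injective. *)
Definition tiebreak (i : 'I_4) : nat := nth 0 [:: 0; 1; 9; 81] i.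

Definition facet_weight (j i : 'I_4) : nat := (729 * facet j i + tiebreak i)%N.

Lemma facet_vertices j : {in O41_vertices, forall V, 10 <= mweight (facet j) V}%N.
Proof.
by apply/allP; case: (ord4P j) => ->; rewrite /= !mweight4.
Qed.

Lemma mweight_facet_weight j m :
  mweight (facet_weight j) m = (729 * mweight (facet j) m + mweight tiebreak m)%N.
Proof.
rewrite /mweight big_distrr -big_split /=.
by apply: eq_bigr => i _; rewrite mulnDl mulnA.
Qed.

Lemma mweight_tiebreak_le m : mdeg m = 8%N -> (mweight tiebreak m <= 728)%N.
Proof. by rewrite mdeg4 mweight4 /tiebreak /=; lia. Qed.

Lemma facet_weight_inj j m m' : mdeg m = 8%N -> mdeg m' = 8%N ->
  mweight (facet_weight j) m = mweight (facet_weight j) m' -> m = m'.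
Proof.
move=> deg_m deg_m'; rewrite !mweight_facet_weight => eq_w.
have : mweight tiebreak m = mweight tiebreak m'.
  by move: (mweight_tiebreak_le deg_m) (mweight_tiebreak_le deg_m'); lia.
move: deg_m deg_m'; rewrite !mdeg4 !mweight4 /tiebreak /= => deg_m deg_m' eq_t.
by apply: mnm4P; lia.
Qed.

Lemma simplex_halves (a b c d : nat) : (a + b + c + d = 4)%N ->
  (5 <= b + 2 * c + 3 * d)%N -> (5 <= 3 * a + c + 2 * d)%N ->
  (5 <= 2 * a + 3 * b + d)%N -> (5 <= a + 2 * b + 3 * c)%N ->
  (a, b, c, d) \in O41_halves.
Proof.
move=> sum4 f0 f1 f2 f3.
have [a_le2 b_le2 c_le2] : [/\ a <= 2, b <= 2 & c <= 2]%N by split; lia.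
have abc_le4 : (a + b + c <= 4)%N by lia.
move: abc_le4 f0 f1 f2 f3; have -> : d = (4 - (a + b + c))%N by lia.
clear sum4; case: a a_le2 => [|[|[|//]]] _; case: b b_le2 => [|[|[|//]]] _;
  by case: c c_le2 => [|[|[|//]]] _.
Qed.

Lemma even_mem_O41_supp m : even_upto 4 m -> mdeg m = 8%N ->
  (forall j, 10 <= mweight (facet j) m)%N -> m \in O41_supp.
Proof.
rewrite even_upto4E mdeg4 => /and4P[e0 e1 e2 e3] deg_m above.
have half i : ~~ odd (m i) -> exists h, m i = (h * 2)%N.
  by move=> even_mi; exists (m i)./2; rewrite muln2 -{1}(odd_double_half (m i)) (negbTE even_mi).
have [a ma] := half _ e0; have [b mb] := half _ e1.
have [c mc] := half _ e2; have [d md] := half _ e3.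
have -> : m = mnm_of_halves (a, b, c, d) by apply: mnm4P.
rewrite O41_supp_halves mem_map; last exact: mnm_of_halves_inj.
have := above i3; have := above i2; have := above i1; have := above i0.
move: deg_m; rewrite !mweight4 ma mb mc md /facet /= => ? ? ? ? ?.
by apply: simplex_halves; lia.
Qed.

Lemma Hpart_sum (R : realType) (F : {mpoly R[4]}) :
  Hpart F = \sum_(m <- O41_supp) F@_m *: 'X_[m].
Proof. by rewrite /Hpart !big_cons big_nil addr0 !addrA. Qed.

Section EvenPartOfBoundedForm.
Variables (R : realType) (F : {mpoly R[4]}).
Hypothesis F_homog : F \is 8.-homog.
Hypothesis F_bounded : forall v : 'I_4 -> R, 0 <= F.@[v] /\ F.@[v] <= (O41 R).@[v].

Lemma even_part_bounded v : 0 <= (mrestrict F (even_upto 4)).@[v] <= (O41 R).@[v].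
Proof.
apply: mrestrict_even_bounded v => [v | k v]; last exact: O41_flip.
by have [-> ->] := F_bounded v.
Qed.

Lemma mcoeff_eq0_facet j m0 : even_upto 4 m0 -> mdeg m0 = 8%N ->
  (mweight (facet j) m0 < 10)%N -> F@_m0 = 0.
Proof.
move=> even_m0 deg_m0 below.
have <- : (mrestrict F (even_upto 4))@_m0 = F@_m0 by rewrite mcoeff_mrestrict even_m0.
apply: (mcoeff_eq0_torus (q := facet_weight j) (M := 4%:R)) => [m | t t_gt0 t_le1].
  rewrite mcoeff_msupp mcoeff_mrestrict; case: ifP => [_ Fm_neq0 | _]; last by rewrite eqxx.
  apply: facet_weight_inj => //; apply/eqP; apply: contraTT Fm_neq0 => deg_neq.
  by rewrite negbK (dhomog_nemf_coeff F_homog deg_neq).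
have /andP[lo hi] := even_part_bounded (fun i => t ^+ facet_weight j i).
rewrite ger0_norm //; apply: le_trans hi (O41_torus_le _ t_gt0 t_le1) => V V_vert.
rewrite !mweight_facet_weight.
by have := facet_vertices j V_vert; have := mweight_tiebreak_le deg_m0; lia.
Qed.

Lemma mrestrict_even_eq_Hpart : mrestrict F (even_upto 4) = Hpart F.
Proof.
apply/mpolyP => m; rewrite mcoeff_mrestrict Hpart_sum mcoeff_sum_seq ?O41_supp_uniq //.
have [m_supp | m_supp] := boolP (m \in O41_supp); first by rewrite O41_supp_even.
case: ifP => // even_m.
have [deg_m | ] := eqVneq (mdeg m) 8%N; last exact: dhomog_nemf_coeff.
have /existsP[j below] : [exists j, mweight (facet j) m < 10]%N.
  apply: contraNT m_supp => /existsPn above.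
  by apply: even_mem_O41_supp => // j; rewrite leqNgt; apply: above.
exact: mcoeff_eq0_facet below.
Qed.

End EvenPartOfBoundedForm.

Definition vec4 (R : pzRingType) (x y z w : R) : 'I_4 -> R := fun i => nth 0 [:: x; y; z; w] i.

Lemma prod_vec4 (R : comPzRingType) (x y z w : R) (a b c d : nat) :
  \prod_i vec4 x y z w i ^+ [multinom [tuple a; b; c; d]] i =
  x ^+ a * y ^+ b * z ^+ c * w ^+ d.
Proof. by rewrite big_ord4. Qed.

Lemma meval_Hpart_vec4 (R : realType) (F : {mpoly R[4]}) x y z w :
  (Hpart F).@[vec4 x y z w] =
  F@_m_xzw * (x ^+ 4 * z ^+ 2 * w ^+ 2) + F@_m_yxw * (y ^+ 4 * x ^+ 2 * w ^+ 2)
  + F@_m_zxy * (z ^+ 4 * x ^+ 2 * y ^+ 2) + F@_m_wyz * (w ^+ 4 * y ^+ 2 * z ^+ 2)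
  + F@_m_xyzw * (x ^+ 2 * y ^+ 2 * z ^+ 2 * w ^+ 2).
Proof. by rewrite /Hpart !mevalD !mevalZ !mevalX !prod_vec4; ring. Qed.

Lemma meval_O41_vec4 (R : realType) (x y z w : R) : (O41 R).@[vec4 x y z w] =
  x ^+ 4 * z ^+ 2 * w ^+ 2 + y ^+ 4 * x ^+ 2 * w ^+ 2 + z ^+ 4 * x ^+ 2 * y ^+ 2
  + w ^+ 4 * y ^+ 2 * z ^+ 2 - 4%:R * (x ^+ 2 * y ^+ 2 * z ^+ 2 * w ^+ 2).
Proof. by rewrite meval_O41 !prod_vec4; ring. Qed.

Theorem lemma2 (R : realType) (F : {mpoly R[4]}) :
  F \is 8.-homog ->
  (forall v : 'I_4 -> R, 0 <= F.@[v] /\ F.@[v] <= (O41 R).@[v]) ->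
  Hpart F = F@_m_xzw *: O41 R /\ 0 <= F@_m_xzw <= 1.
Proof.
move=> F_homog F_bounded.
have H_le x y z w : 0 <= F@_m_xzw * (x ^+ 4 * z ^+ 2 * w ^+ 2)
  + F@_m_yxw * (y ^+ 4 * x ^+ 2 * w ^+ 2) + F@_m_zxy * (z ^+ 4 * x ^+ 2 * y ^+ 2)
  + F@_m_wyz * (w ^+ 4 * y ^+ 2 * z ^+ 2) + F@_m_xyzw * (x ^+ 2 * y ^+ 2 * z ^+ 2 * w ^+ 2)
  <= x ^+ 4 * z ^+ 2 * w ^+ 2 + y ^+ 4 * x ^+ 2 * w ^+ 2 + z ^+ 4 * x ^+ 2 * y ^+ 2
  + w ^+ 4 * y ^+ 2 * z ^+ 2 - 4%:R * (x ^+ 2 * y ^+ 2 * z ^+ 2 * w ^+ 2).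
  rewrite -meval_Hpart_vec4 -meval_O41_vec4 -mrestrict_even_eq_Hpart //.
  exact: even_part_bounded.
rewrite /Hpart; set a := F@_m_xzw in H_le *; set b := F@_m_yxw in H_le *.
set c := F@_m_zxy in H_le *; set d := F@_m_wyz in H_le *; set e := F@_m_xyzw in H_le *.
have e_sum : e = - (a + b + c + d).
  by have := H_le 1 1 1 1; rewrite !expr1n; lra.
have lo_at x y z w := proj1 (andP (H_le x y z w)).
have d_a : d = a.
  by apply/esym/eq_of_sqr_sub1_mul_ge0 => s; have := lo_at s 1 1 1; rewrite e_sum !expr1n; lra.
have b_a : b = a.
  by apply: eq_of_sqr_sub1_mul_ge0 => s; have := lo_at 1 s 1 1; rewrite e_sum d_a !expr1n; lra.
have c_a : c = a.
  by apply: eq_of_sqr_sub1_mul_ge0 => s; have := lo_at 1 1 s 1; rewrite e_sum d_a b_a !expr1n; lra.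
split.
  rewrite O41_mon e_sum b_a c_a d_a scalerBr !scalerDr scalerA -scaleNr.
  by congr (_ + _ *: _); rewrite mulr_natr; ring.
by have := H_le 2 1 1 1; rewrite e_sum b_a c_a d_a !expr1n; lra.
Qed.
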